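(* Let $N\ge2$, $1\le r\le N-1$, $m\ge2$, $\alpha=\begin{pmatrix}\alpha_{11}&\alpha_{12}\\\alpha_{21}&\alpha_{22}\end{pmatrix}\in\mathbb{C}^{N\times N}$. Let $$\beta_{m-1}=\sum_{i\ge0}\begin{pmatrix}A_{m-1,i}&B_{m-1,i}\\C_{m-1,i}&D_{m-1,i}\end{pmatrix}\epsilon^i,\qquad \beta_m=\begin{pmatrix}0&0\\C_{m,0}&D_{m,0}\end{pmatrix}+\sum_{i\ge1}\begin{pmatrix}A_{m,i}&B_{m,i}\\C_{m,i}&D_{m,i}\end{pmatrix}\epsilon^i$$ with $\det\beta_m=O(\epsilon^r)$ and $\det D_{m,0}\neq0$, and let $\beta_{m+1}=m\beta_m^{-1}-\beta_{m-1}-\beta_m-\alpha$. Put $S:=A_{m,1}-B_{m,1}D_{m,0}^{-1}C_{m,0}\in\mathbb{C}^{r\times r}$ (which is invertible). Then, as $\epsilon\to0$, $$\det\beta_{m+1}=\epsilon^{-r}\det\begin{pmatrix}mS^{-1}&-mS^{-1}B_{m,1}D_{m,0}^{-1}-B_{m-1,0}-\alpha_{12}\\-mD_{m,0}^{-1}C_{m,0}S^{-1}&mD_{m,0}^{-1}+mD_{m,0}^{-1}C_{m,0}S^{-1}B_{m,1}D_{m,0}^{-1}-D_{m-1,0}-D_{m,0}-\alpha_{22}\end{pmatrix}+O(\epsilon^{-r+1}).$$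
   Context: Blocks: upper-left $r\times r$, upper-right $r\times(N-r)$, lower-left $(N-r)\times r$, lower-right $(N-r)\times(N-r)$. Expansions are asymptotic expansions in $\epsilon\to0$, inverses computed in the ring of Laurent expansions; $\det\beta_m=O(\epsilon^r)$ means $\det\beta_m=c\epsilon^r+O(\epsilon^{r+1})$ with $c\ne0$. *)

From HB Require Import structures.
From mathcomp Require Import all_boot all_order all_algebra.
From mathcomp Require Import complex.
From mathcomp Require Import reals.
Set Implicit Arguments. Unset Strict Implicit. Unset Printing Implicit Defensive.
Import Order.TTheory GRing.Theory Num.Theory.
Local Open Scope ring_scope.

Definition bigO0 (C : numFieldType) (f : C -> C) (k : int) : Prop :=
  exists (K d : C), 0 < d /\
    forall e : C, 0 < `|e| < d -> `|f e| <= K * `|e| ^ k.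

Definition has_expansion (C : numFieldType) (p q : nat)
    (F : C -> 'M[C]_(p, q)) (c : nat -> 'M[C]_(p, q)) : Prop :=
  forall (K : nat) (i : 'I_p) (j : 'I_q),
    bigO0 (fun e => F e i j - \sum_(n < K) c n i j * e ^+ n) K%:Z.

(* Dividing the first r rows of beta_m e by e gives a matrix G e with
   det (beta_m e) = e^r det (G e) and G 0 = T = [[A_m1, B_m1], [C_m0, D_m0]].
   Comparing with det (beta_m e) = c e^r + O(e^(r+1)) gives
   c = det T = det S * det D_m0, so S is invertible.  Multiplying the
   recursion on the right by beta_m e gives
   beta_(m+1) e * beta_m e = m - (beta_(m-1) e + beta_m e + alpha) * beta_m e,
   whose value at e = 0 factors as M * T (the blocks of M come from the Schur
   complement formula for the inverse of T).  Hence
   det beta_(m+1) * det beta_m = c det M + O(e), and dividing by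
   det beta_m = c e^r (1 + O(e)) gives the expansion of det beta_(m+1). *)

From HB Require Import structures.
From mathcomp Require Import all_boot all_order all_algebra.
From mathcomp Require Import complex.
From mathcomp Require Import reals.
From mathcomp Require Import ring lra.
Import Order.TTheory GRing.Theory Num.Theory.
Local Open Scope ring_scope.
Local Open Scope complex_scope.
Set Implicit Arguments. Unset Strict Implicit. Unset Printing Implicit Defensive.

Section SchurComplement.
Variables (F : fieldType) (r s : nat).
Implicit Types (A : 'M[F]_r) (B : 'M[F]_(r, s)) (C : 'M[F]_(s, r)) (D : 'M[F]_s).

Lemma det_col_mx_scale (a : F) (U : 'M[F]_(r, r + s)) (L : 'M[F]_(s, r + s)) :
  \det (col_mx (a *: U) L) = a ^+ r * \det (col_mx U L).
Proof.
have -> : col_mx (a *: U) L = block_mx a%:M 0 0 1%:M *m col_mx U L.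
  by rewrite mul_block_col !mul0mx mul1mx addr0 add0r mul_scalar_mx.
by rewrite det_mulmx det_lblock det_scalar det1 mulr1.
Qed.

Lemma det_block_schur A B C D : D \in unitmx ->
  \det (block_mx A B C D) = \det (A - B *m invmx D *m C) * \det D.
Proof.
move=> uD.
have E : block_mx 1%:M (- (B *m invmx D)) 0 1%:M *m block_mx A B C D
   = block_mx (A - B *m invmx D *m C) 0 C D.
  by rewrite mulmx_block !mul1mx !mul0mx !add0r !mulNmx mulmxKV // subrr.
have := congr1 determinant E.
by rewrite det_mulmx det_ublock det_lblock !det1 !mul1r.
Qed.

Lemma mul_schur_inv_block A B C D :
  let Di := invmx D in let Si := invmx (A - B *m Di *m C) in
  A - B *m Di *m C \in unitmx -> D \in unitmx ->
  block_mx Si (- (Si *m B *m Di)) (- (Di *m C *m Si))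
    (Di + Di *m C *m Si *m B *m Di) *m block_mx A B C D = 1%:M.
Proof.
move=> Di Si uS uD; rewrite mulmx_block (scalar_mx_block r s 1).
have -> : A = (A - B *m Di *m C) + B *m Di *m C by rewrite subrK.
congr block_mx.
- by rewrite mulmxDr !mulmxA mulVmx // mulNmx addrK.
- by rewrite mulNmx mulmxKV // subrr.
- rewrite !mulNmx mulmxDr mulmxDl !mulmxA mulmxKV //.
  set a := Di *m C; set b := Di *m C *m Si *m B *m Di *m C.
  by rewrite opprD addrACA addNr addNr addr0.
- rewrite !mulNmx mulmxDl ?mulmxA !mulmxKV // mulVmx //.
  set a := Di *m C *m Si *m B.
  by rewrite addrCA addNr addr0.
Qed.

Lemma mul_schur_resolvent_block (k : F) (Q : 'M[F]_(r + s)) A B C D :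
  let Di := invmx D in let Si := invmx (A - B *m Di *m C) in
  A - B *m Di *m C \in unitmx -> D \in unitmx ->
  block_mx (k *: Si) (- (k *: (Si *m B *m Di)) - ursubmx Q) (- (k *: (Di *m C *m Si)))
    (k *: Di + k *: (Di *m C *m Si *m B *m Di) - drsubmx Q) *m block_mx A B C D
  = k%:M - Q *m block_mx 0 0 C D.
Proof.
move=> Di Si uS uD.
have -> : block_mx (k *: Si) (- (k *: (Si *m B *m Di)) - ursubmx Q)
    (- (k *: (Di *m C *m Si))) (k *: Di + k *: (Di *m C *m Si *m B *m Di) - drsubmx Q)
  = k *: block_mx Si (- (Si *m B *m Di)) (- (Di *m C *m Si))
      (Di + Di *m C *m Si *m B *m Di) - Q *m block_mx 0 0 0 1%:M.
  rewrite -[Q in RHS]submxK mulmx_block !mulmx0 !mulmx1 !addr0 !add0r.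
  by rewrite scale_block_mx opp_block_mx add_block_mx !subr0 !scalerN scalerDr.
rewrite mulmxBl -scalemxAl mul_schur_inv_block // scalemx1 -mulmxA.
by rewrite mulmx_block !mul0mx !mul1mx !add0r.
Qed.

End SchurComplement.

Section ComplexAsymptotics.
Variable R : realType.
Local Notation nrm := (@Normc.normc R).
Implicit Types (f g : R[i] -> R[i]) (a b c : R[i]).

Lemma normc_ge0 a : 0 <= nrm a.
Proof. by case: a => x y; exact: sqrtr_ge0. Qed.

Lemma normc_eq0 a : (nrm a == 0) = (a == 0).
Proof. by rewrite -(inj_eq (@complexI R)) -[(nrm a)%:C]/(`|a|) normr_eq0. Qed.

Lemma normc_opp a : nrm (- a) = nrm a.
Proof. exact: normcN. Qed.

Lemma normcX a n : nrm (a ^+ n) = nrm a ^+ n.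
Proof.
elim: n => [|n IH]; first by rewrite !expr0 Normc.normc1.
by rewrite !exprS Normc.normcM IH.
Qed.

Lemma normc_real (t : R) : nrm t%:C = `|t|.
Proof.
by apply: (@complexI R); rewrite -[LHS]/(`|t%:C|) normc_def /= expr0n addr0 sqrtr_sqr.
Qed.

Lemma exprz_realC (t : R) (k : int) : (t%:C) ^ k = (t ^ k)%:C.
Proof. by case: k => n; rewrite /exprz ?fmorphV rmorphXn. Qed.

(* [bigO0] measured with the real modulus [normc], so that estimates live in
   the ordered field R. *)
Definition bigOc f (k : int) : Prop :=
  exists K d : R, 0 < d /\ forall e, 0 < nrm e < d -> nrm (f e) <= K * nrm e ^ k.

Lemma bigO0E f k : bigO0 f k <-> bigOc f k.
Proof.
split.
  case=> [[K K']] [[d d']] [/[!ltcE] /= /andP[/eqP d'0 d0] H]; subst d'.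
  exists K, d; split=> // e /andP[e0 ed].
  have := H e; rewrite -[`|e|]/((nrm e)%:C) exprz_realC -[Complex d 0]/(d%:C) !ltcR.
  by rewrite e0 ed => /(_ isT); rewrite -[`|_|]/((nrm _)%:C) lecE => /andP[_] /=; lra.
case=> K [d [d0 H]]; exists K%:C, d%:C; split; first by rewrite ltcR.
move=> e; rewrite -[`|e|]/((nrm e)%:C) -[`|f e|]/((nrm _)%:C) exprz_realC.
by rewrite -[0]/(0%:C) !ltcR -rmorphM lecR => /andP[e0 ed]; apply: H; rewrite e0 ed.
Qed.

Lemma bigOc_gt0 f k : bigOc f k -> exists K d, 0 < K /\ 0 < d /\
  forall e, 0 < nrm e < d -> nrm (f e) <= K * nrm e ^ k.
Proof.
case=> K [d [d0 H]]; exists (`|K| + 1), d; split; first by rewrite ltr_wpDl.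
split=> // e he; apply: le_trans (H e he) _; apply: ler_wpM2r.
  exact/exprz_ge0/normc_ge0.
by rewrite (le_trans (ler_norm K)) // lerDl.
Qed.

Lemma near_eq_bigOc f g k (d : R) : 0 < d ->
  (forall e, 0 < nrm e < d -> f e = g e) -> bigOc f k -> bigOc g k.
Proof.
move=> d0 fg [K [d' [d'0 H]]]; exists K, (Num.min d d').
split=> [|e /andP[e0]]; first by rewrite lt_min d0 d'0.
by rewrite lt_min => /andP[ed ed']; rewrite -fg ?e0 ?ed //; apply: H; rewrite e0 ed'.
Qed.

Lemma eq_bigOc f g k : (forall e, e != 0 -> f e = g e) -> bigOc f k -> bigOc g k.
Proof.
move=> fg; apply: (near_eq_bigOc ltr01) => e /andP[e0 _].
by apply: fg; rewrite -normc_eq0 gt_eqF.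
Qed.

Lemma bigOc_divXn f (k : int) n :
  bigOc f k -> bigOc (fun e => f e / e ^+ n) (k - n%:Z).
Proof.
case=> K [d [d0 H]]; exists K, d; split=> // e /andP[e0 ed].
rewrite Normc.normcM Normc.normcV normcX expfzDr ?gt_eqF // exprnN mulrA.
by rewrite ler_wpM2r ?H ?e0 //; apply: exprz_ge0; apply: normc_ge0.
Qed.

Definition approx f a := bigOc (fun e => f e - a) 1.

Lemma approxP f a : approx f a -> exists K d, 0 < K /\ 0 < d /\ d <= 1 /\
  forall e, 0 < nrm e < d -> nrm (f e - a) <= K * nrm e.
Proof.
move/bigOc_gt0=> [K [d [K0 [d0 H]]]]; exists K, (Num.min d 1).
do 3?split=> //; first by rewrite lt_min d0 ltr01.
  by rewrite ge_min lexx orbT.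
move=> e /andP[e0]; rewrite lt_min => /andP[ed _].
by rewrite -[nrm e]expr1z; apply: H; rewrite e0 ed.
Qed.

Lemma approx_intro f a K (d : R) : 0 < d ->
  (forall e, 0 < nrm e < d -> nrm (f e - a) <= K * nrm e) -> approx f a.
Proof. by move=> d0 H; exists K, d; split=> // e he; rewrite expr1z; apply: H. Qed.

Lemma approx_cst a : approx (fun=> a) a.
Proof.
by apply: (approx_intro (K := 0) ltr01) => e _; rewrite subrr Normc.normc0 mul0r.
Qed.

Lemma approxD f g a b : approx f a -> approx g b ->
  approx (fun e => f e + g e) (a + b).
Proof.
move=> /approxP [K1 [d1 [_ [d10 [_ H1]]]]] /approxP [K2 [d2 [_ [d20 [_ H2]]]]].
apply: (approx_intro (K := K1 + K2) (d := Num.min d1 d2)).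
  by rewrite lt_min d10 d20.
move=> e /andP[e0]; rewrite lt_min => /andP[e1 e2].
have := H1 e; rewrite e0 e1 => /(_ isT) h1; have := H2 e; rewrite e0 e2 => /(_ isT) h2.
have := le_normcD (f e - a) (g e - b).
have -> : f e - a + (g e - b) = f e + g e - (a + b) by ring.
lra.
Qed.

Lemma approxN f a : approx f a -> approx (fun e => - f e) (- a).
Proof.
by case=> K [d [d0 H]]; exists K, d; split=> // e he; rewrite -opprD normc_opp H.
Qed.

Lemma approxB f g a b : approx f a -> approx g b ->
  approx (fun e => f e - g e) (a - b).
Proof. by move=> hf /approxN; apply: approxD. Qed.

Lemma approxM f g a b : approx f a -> approx g b ->
  approx (fun e => f e * g e) (a * b).
Proof.
move=> /approxP [K1 [d1 [K10 [d10 [d11 H1]]]]] /approxP [K2 [d2 [K20 [d20 [_ H2]]]]].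
apply: (approx_intro (K := K1 * K2 + nrm a * K2 + nrm b * K1) (d := Num.min d1 d2)).
  by rewrite lt_min d10 d20.
move=> e /andP[e0]; rewrite lt_min => /andP[e1 e2].
have := H1 e; rewrite e0 e1 => /(_ isT) h1; have := H2 e; rewrite e0 e2 => /(_ isT) h2.
have -> : f e * g e - a * b = (f e - a) * (g e - b) + a * (g e - b) + (f e - a) * b.
  by ring.
set u := f e - a in h1 *; set v := g e - b in h2 *; set x := nrm e in e1 h1 h2 *.
have t1 := le_normcD (u * v + a * v) (u * b).
have t2 := le_normcD (u * v) (a * v).
rewrite !Normc.normcM in t1 t2.
have u0 := normc_ge0 u; have v0 := normc_ge0 v.
have a0 := normc_ge0 a; have b0 := normc_ge0 b.
have uv : nrm u * nrm v <= (K1 * x) * (K2 * x) by apply: ler_pM.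
have xx : x * x <= x by rewrite ler_piMr // ltW // (lt_le_trans e1 d11).
have p1 : nrm a * nrm v <= nrm a * (K2 * x) by apply: ler_wpM2l.
have p2 : nrm u * nrm b <= (K1 * x) * nrm b by apply: ler_wpM2r.
have p3 : K1 * K2 * (x * x) <= K1 * K2 * x.
  by apply: ler_wpM2l => //; apply: mulr_ge0; apply: ltW.
nra.
Qed.

Lemma approx_big (op : R[i] -> R[i] -> R[i]) (x : R[i]) (I : Type) (s : seq I)
    (P : pred I) (F : I -> R[i] -> R[i]) (a : I -> R[i]) :
  (forall f g u v, approx f u -> approx g v -> approx (fun e => op (f e) (g e)) (op u v)) ->
  (forall i, approx (F i) (a i)) ->
  approx (fun e => \big[op/x]_(i <- s | P i) F i e) (\big[op/x]_(i <- s | P i) a i).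
Proof.
move=> opA H; elim: s => [|y s IH].
  by rewrite big_nil; apply: eq_bigOc (approx_cst x) => e _; rewrite big_nil.
rewrite big_cons; case Py: (P y).
  by apply: eq_bigOc (opA _ _ _ _ (H y) IH) => e _; rewrite big_cons Py.
by apply: eq_bigOc IH => e _; rewrite big_cons Py.
Qed.

Lemma approx_cstK a b : approx (fun=> b) a -> a = b.
Proof.
move=> /approxP [K [d [K0 [d0 [_ H]]]]]; apply/eqP; rewrite eq_sym -subr_eq0.
apply/negPn/negP => ba; have ba0 : 0 < nrm (b - a) by rewrite lt_def normc_eq0 ba normc_ge0.
set t := Num.min (d / 2) (nrm (b - a) / (2 * K)).
have t0 : 0 < t by rewrite lt_min !divr_gt0 ?mulr_gt0.
have td : t < d by rewrite gt_min ltr_pdivrMr // ltr_pMr // ltr1n.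
have tb : K * t <= nrm (b - a) / 2.
  have : t <= nrm (b - a) / (2 * K) by rewrite ge_min lexx orbT.
  rewrite ler_pdivlMr ?mulr_gt0 //; nra.
have := H t%:C; rewrite normc_real gtr0_norm // t0 td => /(_ isT); lra.
Qed.

Lemma approx_unique f a b : approx f a -> approx f b -> a = b.
Proof.
move=> ha hb; apply/eqP; rewrite -subr_eq0; apply/eqP/approx_cstK.
by apply: eq_bigOc (approxB ha hb) => e _; rewrite subrr.
Qed.

Lemma approx_lower f c : approx f c -> c != 0 -> exists d : R, 0 < d /\
  forall e, 0 < nrm e < d -> nrm c / 2 <= nrm (f e).
Proof.
move=> /approxP [K [d [K0 [d0 [_ H]]]]] c0.
have c0' : 0 < nrm c by rewrite lt_def normc_eq0 c0 normc_ge0.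
exists (Num.min d (nrm c / (2 * K))); split; first by rewrite lt_min d0 divr_gt0 ?mulr_gt0.
move=> e /andP[e0]; rewrite lt_min => /andP[ed]; rewrite ltr_pdivlMr ?mulr_gt0 // => ec.
have := H e; rewrite e0 ed => /(_ isT) h.
have := le_normcD (f e) (c - f e).
rewrite [f e + _]addrC subrK -[c - f e]opprB normc_opp; lra.
Qed.

Lemma approxV f c : approx f c -> c != 0 -> approx (fun e => (f e)^-1) c^-1.
Proof.
move=> hf c0; have [d1 [d10 H1]] := approx_lower hf c0.
move/approxP: hf => [K [d2 [K0 [d20 [_ H2]]]]].
have c0' : 0 < nrm c by rewrite lt_def normc_eq0 c0 normc_ge0.
apply: (approx_intro (K := 2 * K / nrm c ^+ 2) (d := Num.min d1 d2)).
  by rewrite lt_min d10 d20.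
move=> e /andP[e0]; rewrite lt_min => /andP[e1 e2].
have := H1 e; rewrite e0 e1 => /(_ isT) h1; have := H2 e; rewrite e0 e2 => /(_ isT) h2.
have fe0 : 0 < nrm (f e) by apply: lt_le_trans h1; rewrite divr_gt0.
have -> : (f e)^-1 - c^-1 = - (f e - c) / (f e * c).
  by field; rewrite -!normc_eq0 !gt_eqF.
rewrite Normc.normcM Normc.normcV Normc.normcM normc_opp ler_pdivrMr ?mulr_gt0 //.
apply: le_trans h2 _.
have -> : 2 * K / nrm c ^+ 2 * nrm e * (nrm (f e) * nrm c)
    = K * nrm e * (2 * nrm (f e) / nrm c) by field; rewrite gt_eqF.
by rewrite ler_pMr ?mulr_gt0 // ler_pdivlMr // mul1r; lra.
Qed.

Lemma approx_divXn p c n :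
  bigOc (fun e => p e - c * e ^+ n) n.+1 -> approx (fun e => p e / e ^+ n) c.
Proof.
move/(bigOc_divXn n); rewrite (_ : n.+1%:Z - n%:Z = 1); last first.
  by rewrite -addn1 PoszD addrAC subrr add0r.
by apply: eq_bigOc => e e0; rewrite mulrBl mulfK // expf_neq0.
Qed.

Lemma bigOc_quotient n p q f c mu : c != 0 ->
  bigOc (fun e => p e - c * e ^+ n) n.+1 -> approx f (c * mu) ->
  (forall e, p e != 0 -> q e * p e = f e) ->
  bigOc (fun e => q e - e ^ (- n%:Z) * mu) (1 - n%:Z).
Proof.
move=> c0 hp hf hqp; have hu := approx_divXn hp.
have [d [d0 hlow]] := approx_lower hu c0.
have hq : approx (fun e => e ^+ n * q e) mu.
  have := approxM hf (approxV hu c0); rewrite mulrAC divff // mul1r.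
  apply: (near_eq_bigOc d0) => e /andP[e0 ed].
  have e0' : e != 0 by rewrite -normc_eq0 gt_eqF.
  have pe0 : p e != 0.
    have := hlow e; rewrite e0 ed => /(_ isT); apply: contraTneq => ->.
    by rewrite mul0r Normc.normc0 -ltNge divr_gt0 // lt_def normc_eq0 c0 normc_ge0.
  by rewrite -(hqp e pe0); field; rewrite pe0 expf_neq0.
apply: eq_bigOc (bigOc_divXn n hq) => e e0.
by rewrite -exprnN; field; rewrite expf_neq0.
Qed.

Definition mxapprox p q (F : R[i] -> 'M[R[i]]_(p, q)) (A : 'M_(p, q)) :=
  forall i j, approx (fun e => F e i j) (A i j).

Lemma mxapprox_cst p q (A : 'M[R[i]]_(p, q)) : mxapprox (fun=> A) A.
Proof. by move=> i j; apply: approx_cst. Qed.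

Lemma mxapproxD p q (F G : R[i] -> 'M_(p, q)) A B :
  mxapprox F A -> mxapprox G B -> mxapprox (fun e => F e + G e) (A + B).
Proof.
move=> hF hG i j; rewrite mxE.
by apply: eq_bigOc (approxD (hF i j) (hG i j)) => e _; rewrite mxE.
Qed.

Lemma mxapproxB p q (F G : R[i] -> 'M_(p, q)) A B :
  mxapprox F A -> mxapprox G B -> mxapprox (fun e => F e - G e) (A - B).
Proof.
move=> hF hG i j; rewrite !mxE.
by apply: eq_bigOc (approxB (hF i j) (hG i j)) => e _; rewrite !mxE.
Qed.

Lemma mxapprox_mulmx p q l (F : R[i] -> 'M_(p, q)) (G : R[i] -> 'M_(q, l)) A B :
  mxapprox F A -> mxapprox G B -> mxapprox (fun e => F e *m G e) (A *m B).
Proof.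
move=> hF hG i j; rewrite mxE.
apply: eq_bigOc (approx_big _ _ _ approxD (fun k => approxM (hF i k) (hG k j))) => e _.
by rewrite mxE.
Qed.

Lemma approx_det n (F : R[i] -> 'M_n) A :
  mxapprox F A -> approx (fun e => \det (F e)) (\det A).
Proof.
move=> hF; apply: approx_big _ _ _ approxD _ => s.
apply: approxM (approx_cst _) _.
by apply: approx_big _ _ _ approxM _ => i.
Qed.

Lemma has_expansion_mxapprox p q (F : R[i] -> 'M_(p, q)) (c : nat -> 'M_(p, q)) :
  has_expansion F c -> mxapprox F (c 0%N).
Proof.
move=> hF i j; have /bigO0E := hF 1%N i j.
by apply: eq_bigOc => e _; rewrite big_ord1 expr0 mulr1.
Qed.

Lemma has_expansion_rescale r s q (F : R[i] -> 'M_(r + s, q)) (c : nat -> 'M_(r + s, q)) :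
  has_expansion F c -> usubmx (c 0%N) = 0 ->
  mxapprox (fun e => col_mx (e^-1 *: usubmx (F e)) (dsubmx (F e)))
           (col_mx (usubmx (c 1%N)) (dsubmx (c 0%N))).
Proof.
move=> hF c0 i j; rewrite -(splitK i); case: (split i) => k /=; last first.
  apply: eq_bigOc (has_expansion_mxapprox hF (rshift r k) j) => e _.
  by rewrite !col_mxEd !mxE.
have /bigO0E/(bigOc_divXn 1) := hF 2%N (lshift s k) j.
apply: eq_bigOc => e e0.
rewrite !big_ord_recr big_ord0 /= add0r expr0 expr1 !col_mxEu !mxE.
have -> : c 0%N (lshift s k) j = 0 by move/matrixP/(_ k j): c0; rewrite !mxE.
by field.
Qed.

Lemma has_expansion_det_lead r s (F : R[i] -> 'M_(r + s)) (c : nat -> 'M_(r + s)) a :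
  has_expansion F c -> usubmx (c 0%N) = 0 ->
  bigOc (fun e => \det (F e) - a * e ^+ r) r.+1 ->
  \det (col_mx (usubmx (c 1%N)) (dsubmx (c 0%N))) = a.
Proof.
move=> hF c0 ha; apply: approx_unique (approx_det (has_expansion_rescale hF c0)) _.
apply: eq_bigOc (approx_divXn ha) => e e0.
rewrite -[X in \det X / _](vsubmxK (F e)) -[X in col_mx X _](scalerKV e0).
by rewrite det_col_mx_scale [_ * \det _]mulrC mulfK // expf_neq0.
Qed.

End ComplexAsymptotics.


Unset Implicit Arguments.

Theorem lemma2 (R : realType) (r s m : nat) (hr : (0 < r)%N) (hs : (0 < s)%N)
  (hm : (2 <= m)%N)
  (alpha : 'M[R[i]]_(r + s))
  (beta_m1 beta_m : R[i] -> 'M[R[i]]_(r + s))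
  (c_m1 c_m : nat -> 'M[R[i]]_(r + s))
  (exp_m1 : has_expansion beta_m1 c_m1)
  (exp_m : has_expansion beta_m c_m)
  (A0 : ulsubmx (c_m 0%N) = 0) (B0 : ursubmx (c_m 0%N) = 0)
  (hdet : exists c : R[i], c != 0 /\
            bigO0 (fun e => \det (beta_m e) - c * e ^+ r) (r.+1)%:Z)
  (hD : \det (drsubmx (c_m 0%N)) != 0) :
  let beta_p1 := fun e : R[i] =>
    m%:R *: invmx (beta_m e) - beta_m1 e - beta_m e - alpha in
  let Dm0i := invmx (drsubmx (c_m 0%N)) in
  let Cm0 := dlsubmx (c_m 0%N) in
  let Bm1 := ursubmx (c_m 1%N) in
  let S := ulsubmx (c_m 1%N) - Bm1 *m Dm0i *m Cm0 in
  let Si := invmx S in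
  let M := block_mx
     (m%:R *: Si)
     (- (m%:R *: (Si *m Bm1 *m Dm0i)) - ursubmx (c_m1 0%N) - ursubmx alpha)
     (- (m%:R *: (Dm0i *m Cm0 *m Si)))
     (m%:R *: Dm0i + m%:R *: (Dm0i *m Cm0 *m Si *m Bm1 *m Dm0i)
        - drsubmx (c_m1 0%N) - drsubmx (c_m 0%N) - drsubmx alpha) in
  S \in unitmx /\
  bigO0 (fun e => \det (beta_p1 e) - e ^ (- (r%:Z)) * \det M) (1 - r%:Z).
Proof.
move=> beta_p1 Dm0i Cm0 Bm1 S Si M.
have [c [c0 /bigO0E hc]] := hdet.
have uD : drsubmx (c_m 0%N) \in unitmx by rewrite unitmxE unitfE.
have c_m0E : c_m 0%N = block_mx 0 0 Cm0 (drsubmx (c_m 0%N)) by rewrite -A0 -B0 submxK.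
set T := block_mx (ulsubmx (c_m 1%N)) Bm1 Cm0 (drsubmx (c_m 0%N)).
have detT : \det T = c.
  have c_m0u : usubmx (c_m 0%N) = 0 by rewrite c_m0E /block_mx col_mxKu row_mx0.
  by rewrite /T /block_mx !hsubmxK; apply: has_expansion_det_lead exp_m c_m0u hc.
have uS : S \in unitmx.
  move: c0; rewrite -detT det_block_schur // mulf_eq0 negb_or.
  by rewrite unitmxE unitfE => /andP[].
split=> //.
set Q := c_m1 0%N + c_m 0%N + alpha.
have MT : M *m T = m%:R%:M - Q *m c_m 0%N.
  rewrite [X in Q *m X]c_m0E -(mul_schur_resolvent_block _ _ uS uD); congr (_ *m _).
  rewrite /M /Q /ursubmx /drsubmx !raddfD /= -/(ursubmx (c_m 0%N)) B0.
  by rewrite subr0 !addrA.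
apply/bigO0E; apply: (bigOc_quotient (f := fun e =>
  \det (m%:R%:M - (beta_m1 e + beta_m e + alpha) *m beta_m e)) c0 hc).
  rewrite -detT mulrC -det_mulmx MT; apply: approx_det.
  apply: mxapproxB (mxapprox_cst _) (mxapprox_mulmx _ (has_expansion_mxapprox exp_m)).
  apply: mxapproxD (mxapprox_cst _).
  exact: mxapproxD (has_expansion_mxapprox exp_m1) (has_expansion_mxapprox exp_m).
move=> e; rewrite -unitfE -unitmxE => ub.
by rewrite -det_mulmx !mulmxBl -scalemxAl mulVmx // scalemx1 !mulmxDl !opprD !addrA.
Qed.
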